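(* Let $n,m\ge 1$, $T\in\mathbb Z_{\ge1}$, $1\le L_D\le T$, $\alpha\in(0,1)$, $\mu\ge 1$, $\bar B\ge0$, $\bar\epsilon\ge0$, and suppose the dwell time satisfies $T>-\ln\mu/\ln\alpha$. Set $\hat\alpha:=\alpha\,\mu^{1/T}$, so that $\hat\alpha\in[\alpha,1)$. For $i\in\mathbb Z_{\ge0}$ let $k_i:=iT$, $\mathcal T_i:=\{k_i,\dots,k_i+T-1\}$ and $\mathcal T_i^D:=\{k_{i+1}-L_D,\dots,k_{i+1}-1\}\subseteq\mathcal T_i$. Let $P_{\min},P_{\max}$ be symmetric positive definite $n\times n$ matrices, $p_{\min}:=\lambda_{\min}(P_{\min})$, $p_{\max}:=\lambda_{\max}(P_{\max})$, and let $(P_i)_{i\ge0}$ be symmetric positive definite matrices with $P_{\min}\preceq P_i\preceq P_{\max}$ and $P_{i+1}\preceq\mu P_i$ for all $i$. Let $\eta(k)\in\mathbb R^n$, $k\in\mathbb Z_{\ge0}$, be a sequence satisfying $$\eta(k+1)=g(k)+B(k)\,\epsilon(k),\qquad k\ge0,$$ where $g(k)\in\mathbb R^n$, $B(k)\in\mathbb R^{n\times m}$ with $\|B(k)\|\le\bar B$, $\epsilon(k)\in\mathbb R^m$ with $\epsilon(k)=0$ for $k\in\mathcal T_i\setminus\mathcal T_i^D$ and $\|\epsilon(k)\|\le\bar\epsilon$ for $k\in\mathcal T_i^D$, and for every $i$ and every $k\in\mathcal T_i$ the one-step decay $$\big\|P_i^{1/2}g(k)\big\|\le\sqrt{\alpha}\,\big\|P_i^{1/2}\eta(k)\big\|$$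 holds. (In the paper's setting, $g(k)=(A(k)+B(k)K_i)\eta(k)+d(k)$ is the closed-loop deviation update under the feedback $\xi=K_i\eta$ and the decay is the robust Lyapunov decrease certified on segment $i$.) Then for all $k\in\mathbb Z_{\ge0}$, $$\|\eta(k)\|\le\sqrt{\tfrac{p_{\max}}{p_{\min}}}\;\hat\alpha^{k/2}\,\|\eta(0)\|+\sqrt{\tfrac{p_{\max}}{p_{\min}}}\;\frac{(\hat\alpha/\alpha)^{T/2}}{1-\sqrt{\hat\alpha}}\;\bar B\,\bar\epsilon .$$
   Context: $\|\cdot\|$ is the Euclidean norm on vectors and the induced spectral norm on matrices; $P^{1/2}$ is the symmetric positive definite square root; $\preceq$ is the Loewner order; $\lambda_{\min},\lambda_{\max}$ denote extremal eigenvalues. *)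

From HB Require Import structures.
From mathcomp Require Import all_boot all_order all_algebra.
From mathcomp Require Import all_classical all_reals all_analysis.
Set Implicit Arguments. Unset Strict Implicit. Unset Printing Implicit Defensive.
Import Order.TTheory GRing.Theory Num.Theory.
Local Open Scope classical_set_scope.
Local Open Scope ring_scope.

Section Defs.
Variable R : realType.

Definition vnorm (n : nat) (v : 'cV[R]_n) : R :=
  Num.sqrt (\sum_(i < n) v i 0 ^+ 2).

Definition opnorm (n m : nat) (B : 'M[R]_(n, m)) : R :=
  sup [set vnorm (B *m v) | v in [set v : 'cV[R]_m | vnorm v <= 1]].

Definition qform (n : nat) (P : 'M[R]_n) (x : 'cV[R]_n) : R :=
  (x^T *m P *m x) 0 0.

Definition symmetric (n : nat) (P : 'M[R]_n) : Prop := P^T = P.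

Definition spd (n : nat) (P : 'M[R]_n) : Prop :=
  symmetric P /\ forall x : 'cV[R]_n, x != 0 -> 0 < qform P x.

Definition loewner_le (n : nat) (P Q : 'M[R]_n) : Prop :=
  forall x : 'cV[R]_n, qform P x <= qform Q x.

Definition is_spd_sqrt (n : nat) (S P : 'M[R]_n) : Prop :=
  spd S /\ S *m S = P.

Definition lambda_min (n : nat) (P : 'M[R]_n) : R :=
  inf [set a : R | eigenvalue P a].
Definition lambda_max (n : nat) (P : 'M[R]_n) : R :=
  sup [set a : R | eigenvalue P a].

End Defs.

(* Write V_i(x) := |P_i^(1/2) x|.  On segment i the decay hypothesis and |B eps| <= Bbar epsbar
   give V_i(eta(k+1)) <= sqrt(alpha) V_i(eta(k)) + sqrt(pmax) Bbar epsbar, while P_(i+1) <= mu P_i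
   gives V_(i+1) <= sqrt(mu) V_i at a switch.  With sg := mu^(1/(2T)), so that sg^T = sqrt(mu),
   the weighted quantity sg^(k mod T) V_(k div T)(eta(k)) satisfies the scalar recursion
   w(k+1) <= sqrt(alpha) sg w(k) + sg^T sqrt(pmax) Bbar epsbar, and sqrt(alpha) sg = sqrt(ahat) < 1
   is exactly the dwell-time condition.  Summing the geometric series and comparing V_i with the
   Euclidean norm through pmin and pmax gives the bound; these extremal eigenvalues, defined as an
   inf/sup, are attained, since the Rayleigh quotient has a maximizer on the compact unit sphere
   and every maximizer is an eigenvector. *)

From HB Require Import structures.
From mathcomp Require Import all_boot all_order all_algebra.
From mathcomp Require Import all_classical all_reals all_analysis.
From mathcomp Require Import ring lra.
Import Order.TTheory GRing.Theory Num.Theory.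
Import numFieldNormedType.Exports.
Local Open Scope classical_set_scope.
Local Open Scope ring_scope.

Section RowDot.
Context {R : realType} {n : nat}.
Implicit Types (u v w : 'rV[R]_n) (Q : 'M[R]_n).

Definition rdot u v : R := (u *m v^T) 0 0.

Lemma rdotE u v : rdot u v = \sum_i u 0 i * v 0 i.
Proof. by rewrite /rdot mxE; apply: eq_bigr => i _; rewrite mxE. Qed.

Lemma rdotC u v : rdot u v = rdot v u.
Proof. by rewrite !rdotE; apply: eq_bigr => i _; rewrite mulrC. Qed.

Lemma rdotDl u v w : rdot (u + v) w = rdot u w + rdot v w.
Proof. by rewrite /rdot mulmxDl mxE. Qed.

Lemma rdotZl t u v : rdot (t *: u) v = t * rdot u v.
Proof. by rewrite /rdot -scalemxAl mxE. Qed.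

Lemma rdotDr u v w : rdot u (v + w) = rdot u v + rdot u w.
Proof. by rewrite rdotC rdotDl !(rdotC u). Qed.

Lemma rdotZr t u v : rdot u (t *: v) = t * rdot u v.
Proof. by rewrite rdotC rdotZl rdotC. Qed.

Lemma rdot0r u : rdot u 0 = 0.
Proof. by rewrite -(scale0r 0) rdotZr mul0r. Qed.

Lemma rdotvv_ge0 u : 0 <= rdot u u.
Proof. by rewrite rdotE sumr_ge0 // => i _; rewrite -expr2 sqr_ge0. Qed.

Lemma rdotvv_eq0 u : (rdot u u == 0) = (u == 0).
Proof.
apply/idP/eqP => [|->]; last by rewrite rdot0r.
rewrite rdotE psumr_eq0 => [/allP u0|i _]; last by rewrite -expr2 sqr_ge0.
apply/rowP => i; rewrite mxE; have := u0 i (mem_index_enum i).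
by rewrite implyTb mulf_eq0 orbb => /eqP.
Qed.

Lemma rdotvv_gt0 {u} : u != 0 -> 0 < rdot u u.
Proof. by rewrite lt_def rdotvv_eq0 rdotvv_ge0 andbT. Qed.

Lemma rdot_expand u v t :
  rdot (u + t *: v) (u + t *: v) = rdot u u + 2 * t * rdot u v + t ^+ 2 * rdot v v.
Proof. by rewrite !rdotDl !rdotDr !rdotZl !rdotZr (rdotC v u); ring. Qed.

Lemma rdot_sqr_le u v : rdot u v ^+ 2 <= rdot u u * rdot v v.
Proof.
have [->|v0] := eqVneq v 0; first by rewrite !rdot0r expr0n mulr0.
have vpos := rdotvv_gt0 v0; set t := rdot u v / rdot v v.
have tv : t * rdot v v = rdot u v by rewrite /t mulfVK ?gt_eqF.
have := rdotvv_ge0 (u + (- t) *: v); rewrite rdot_expand -tv.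
by move: vpos; set a := rdot v v; set b := rdot u u; nra.
Qed.

Lemma rdot_mulmx_sym Q u v : Q^T = Q -> rdot (u *m Q) v = rdot (v *m Q) u.
Proof.
move=> sQ; rewrite /rdot [LHS](_ : _ = (u *m Q *m v^T)^T 0 0); last by rewrite [RHS]mxE.
by rewrite !trmx_mul trmxK sQ mulmxA.
Qed.

Lemma continuous_rdot_mulmx Q : continuous (fun u => rdot (u *m Q) u).
Proof.
have coord i : continuous (fun u : 'rV[R]_n => u 0 i) by exact: coord_continuous.
have sumC (I : finType) (F : I -> 'rV[R]_n -> R) :
    (forall i, continuous (F i)) -> continuous (fun u => \sum_i F i u).
  move=> FC; rewrite unlock; elim: (index_enum I) => [|i s IH] u /=.
    exact: cst_continuous.
  exact: (continuousD (FC i u) (IH u)).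
have -> : (fun u => rdot (u *m Q) u) = fun u => \sum_j (\sum_i u 0 i * Q i j) * u 0 j.
  apply: funext => u; rewrite rdotE; apply: eq_bigr => j _.
  by rewrite mxE; congr (_ * _); apply: eq_bigr => i _.
apply: (sumC) => j u; apply: continuousM; last exact: coord.
apply: (sumC _ _ _ u) => i v; apply: continuousM; [exact: coord | exact: cst_continuous].
Qed.

Lemma compact_unit_sphere : compact [set u : 'rV[R]_n | rdot u u = 1].
Proof.
apply: bounded_closed_compact.
  exists 1; split; first by rewrite num_real.
  move=> M M1 u /= u1; rewrite [X in X <= _]/Num.norm /= mx_normrE.
  apply: bigmax_le => [|[i j] _]; first by rewrite ltW // (lt_trans _ M1).
  rewrite (le_trans _ (ltW M1)) //= (ord1 i).
  have : u 0 j ^+ 2 <= 1.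
    rewrite -u1 rdotE (bigD1 j) //= -expr2 lerDl sumr_ge0 // => k _.
    by rewrite -expr2 sqr_ge0.
  by rewrite -real_normK ?num_real // -[X in _ <= X](expr1n _ 2) ler_pXn2r ?nnegrE.
have -> : [set u | rdot u u = 1] = (fun u => rdot (u *m 1%:M) u) @^-1` [set x | x = 1].
  by apply/seteqP; split => u /=; rewrite mulmx1.
apply: preimage_closed; last exact: closed_eq.
by move=> u _; exact: continuous_rdot_mulmx.
Qed.

End RowDot.

Section Rayleigh.
Context {R : realType} {n : nat}.
Variable P : 'M[R]_n.+1.

Lemma rayleigh_maximizer : exists2 v : 'rV[R]_n.+1,
  rdot v v = 1 & forall w, rdot (w *m P) w <= rdot (v *m P) v * rdot w w.
Proof.
have sphere0 : [set u : 'rV[R]_n.+1 | rdot u u = 1] !=set0.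
  exists (delta_mx 0 0); rewrite /= rdotE (bigD1 ord0) //= big1 ?addr0.
    by rewrite !mxE eqxx mulr1.
  by move=> j /negbTE j0; rewrite !mxE j0 mulr0.
have [v /set_mem /= v1 vmax] := EVT_max_rV sphere0 compact_unit_sphere
  (continuous_subspaceT (continuous_rdot_mulmx P)).
exists v => // w; have [->|w0] := eqVneq w 0; first by rewrite mul0mx !rdot0r mulr0.
have c0 : 0 < Num.sqrt (rdot w w) by rewrite sqrtr_gt0 rdotvv_gt0.
set c := Num.sqrt _ in c0; have c2 : c ^+ 2 = rdot w w by rewrite sqr_sqrtr ?rdotvv_ge0.
have /vmax : c^-1 *: w \in [set u | rdot u u = 1].
  by rewrite inE /= rdotZl rdotZr -c2; field; rewrite gt_eqF.
rewrite -scalemxAl rdotZl rdotZr -ler_pdivlMl ?invr_gt0 // -ler_pdivlMl ?invr_gt0 //.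
by rewrite !invrK mulrA -expr2 c2 mulrC.
Qed.

Hypothesis sP : P^T = P.

(* First-order optimality: moving from the maximizer v along the residual
   v P - lam v would increase the Rayleigh quotient. *)
Lemma rayleigh_maximizer_eigen v : rdot v v = 1 ->
  (forall w, rdot (w *m P) w <= rdot (v *m P) v * rdot w w) ->
  v *m P = rdot (v *m P) v *: v.
Proof.
move=> v1 vmax; set lam := rdot (v *m P) v in vmax *.
set u := v *m P - lam *: v; have vP : v *m P = u + lam *: v by rewrite subrK.
apply/eqP; rewrite -subr_eq0 -/u -rdotvv_eq0 eq_le rdotvv_ge0 andbT leNgt.
apply/negP => upos; set d := rdot u u in upos.
have q0 : 0 <= lam * d - rdot (u *m P) u by rewrite subr_ge0 vmax.
have vPu : rdot (v *m P) u = d + lam * rdot v u by rewrite vP rdotDl rdotZl.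
set t := d / (lam * d - rdot (u *m P) u + 1).
have tq : t * (lam * d - rdot (u *m P) u + 1) = d by rewrite /t mulfVK // gt_eqF // ltr_wpDl.
have tpos : 0 < t by rewrite /t divr_gt0 // ltr_wpDl.
have := vmax (v + t *: u).
rewrite mulmxDl -scalemxAl !rdotDl !rdotDr !rdotZl !rdotZr (rdot_mulmx_sym P u v sP).
rewrite -/lam v1 vPu (rdotC u v) -/d; nra.
Qed.

Lemma eigenvalue_le_rayleigh_bound a lam : eigenvalue P a ->
  (forall w, rdot (w *m P) w <= lam * rdot w w) -> a <= lam.
Proof.
move=> /eigenvalueP [w wP w0] /(_ w); rewrite wP rdotZl ler_pM2r //.
exact: rdotvv_gt0.
Qed.

Lemma lambda_maxP : eigenvalue P (lambda_max P) /\
  forall w, rdot (w *m P) w <= lambda_max P * rdot w w.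
Proof.
have [v v1 vmax] := rayleigh_maximizer; set lam := rdot (v *m P) v in vmax.
have ev : eigenvalue P lam.
  apply/eigenvalueP; exists v; first exact: rayleigh_maximizer_eigen.
  by rewrite -rdotvv_eq0 v1 oner_eq0.
suff -> : lambda_max P = lam by [].
have ub : ubound [set a | eigenvalue P a] lam.
  by move=> a /= /eigenvalue_le_rayleigh_bound; apply.
apply/eqP; rewrite eq_le ge_sup //=; last by exists lam.
by apply: ub_le_sup => //; exists lam.
Qed.

End Rayleigh.

Section EuclideanNorm.
Context {R : realType} {n : nat}.

Lemma vnorm_sqr (x : 'cV[R]_n) : vnorm x ^+ 2 = rdot x^T x^T.
Proof.
rewrite /vnorm sqr_sqrtr ?sumr_ge0 // => [|i _]; last exact: sqr_ge0.
by rewrite rdotE; apply: eq_bigr => i _; rewrite !mxE expr2.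
Qed.

Lemma vnorm_ge0 (x : 'cV[R]_n) : 0 <= vnorm x.
Proof. exact: sqrtr_ge0. Qed.

Lemma vnormE (x : 'cV[R]_n) : vnorm x = Num.sqrt (rdot x^T x^T).
Proof. by rewrite -vnorm_sqr sqrtr_sqr ger0_norm ?vnorm_ge0. Qed.

Lemma vnorm_eq0 (x : 'cV[R]_n) : (vnorm x == 0) = (x == 0).
Proof.
rewrite -sqrf_eq0 vnorm_sqr rdotvv_eq0.
by apply/eqP/eqP => [/(congr1 trmx)|->]; rewrite ?trmxK linear0.
Qed.

Lemma vnorm0 : vnorm (0 : 'cV[R]_n) = 0.
Proof. by apply/eqP; rewrite vnorm_eq0. Qed.

Lemma vnormZ (x : 'cV[R]_n) c : vnorm (c *: x) = `|c| * vnorm x.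
Proof.
rewrite !vnormE linearZ /= rdotZl rdotZr mulrA -expr2 sqrtrM ?sqr_ge0 //.
by rewrite sqrtr_sqr.
Qed.

Lemma vnormD (x y : 'cV[R]_n) : vnorm (x + y) <= vnorm x + vnorm y.
Proof.
have := rdot_sqr_le x^T y^T; rewrite -!vnorm_sqr -exprMn => cs.
have xy0 : 0 <= vnorm x * vnorm y by rewrite mulr_ge0 ?vnorm_ge0.
have {}cs : rdot x^T y^T <= vnorm x * vnorm y by move: cs; nra.
rewrite -ler_sqr ?nnegrE ?addr_ge0 ?vnorm_ge0 //.
by rewrite vnorm_sqr linearD /= rdotDl !rdotDr (rdotC y^T) -!vnorm_sqr; nra.
Qed.

End EuclideanNorm.

Section OperatorNorm.
Context {R : realType} {n m : nat}.

Lemma vnorm_mulmx_sqr_le (B : 'M[R]_(n, m)) w :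
  vnorm (B *m w) ^+ 2 <= (\sum_i rdot (row i B) (row i B)) * vnorm w ^+ 2.
Proof.
rewrite (vnorm_sqr (B *m w)) rdotE mulr_suml; apply: ler_sum => i _.
have -> : (B *m w)^T 0 i * (B *m w)^T 0 i = rdot (row i B) w^T ^+ 2.
  by rewrite !mxE expr2 rdotE; congr (_ * _); apply: eq_bigr => j _; rewrite !mxE.
by rewrite vnorm_sqr rdot_sqr_le.
Qed.

Lemma opnorm_bound (B : 'M[R]_(n, m)) v : vnorm (B *m v) <= opnorm B * vnorm v.
Proof.
have [->|v0] := eqVneq v 0; first by rewrite mulmx0 !vnorm0 mulr0.
have vpos : 0 < vnorm v by rewrite lt_def vnorm_eq0 v0 vnorm_ge0.
set K := \sum_i rdot (row i B) (row i B).
have K0 : 0 <= K by rewrite sumr_ge0 // => i _; exact: rdotvv_ge0.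
have ub : has_ubound [set vnorm (B *m w) | w in [set w : 'cV[R]_m | vnorm w <= 1]].
  exists (Num.sqrt K) => _ [w /= w1 <-].
  rewrite -ler_sqr ?nnegrE ?vnorm_ge0 ?sqrtr_ge0 // (sqr_sqrtr K0).
  apply: le_trans (vnorm_mulmx_sqr_le B w) _; rewrite ler_piMr //.
  by rewrite expr_le1 ?vnorm_ge0.
have : vnorm (B *m ((vnorm v)^-1 *: v)) <= opnorm B.
  apply: (ub_le_sup ub); exists ((vnorm v)^-1 *: v) => //=.
  by rewrite vnormZ ger0_norm ?invr_ge0 ?vnorm_ge0 // mulVf ?gt_eqF.
by rewrite -scalemxAr vnormZ ger0_norm ?invr_ge0 ?vnorm_ge0 // ler_pdivrMl // mulrC.
Qed.

End OperatorNorm.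

Section QuadraticForm.
Context {R : realType} {n m : nat}.
Implicit Types (P Q S : 'M[R]_n.+1) (x : 'cV[R]_n.+1).

Lemma qform_rdot P x : qform P x = rdot (x^T *m P) x^T.
Proof. by rewrite /qform /rdot trmxK. Qed.

Lemma qform_le_lambda_max P x : P^T = P -> qform P x <= lambda_max P * vnorm x ^+ 2.
Proof. by move=> sP; rewrite qform_rdot vnorm_sqr; apply: (lambda_maxP P sP).2. Qed.

Lemma eigenvalueN P a : eigenvalue (- P) a = eigenvalue P (- a).
Proof.
apply/eigenvalueP/eigenvalueP => -[w wP w0]; exists w => //.
  by rewrite scaleNr -wP mulmxN opprK.
by rewrite mulmxN wP scaleNr opprK.
Qed.

Lemma lambda_minE P : lambda_min P = - lambda_max (- P).
Proof.
rewrite /lambda_min /inf; congr (- sup _); apply/seteqP; split => a /=.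
  by move=> [b eb <-]; rewrite eigenvalueN opprK.
by move=> ea; exists (- a); rewrite -?eigenvalueN ?opprK.
Qed.

Lemma lambda_min_le_qform P x : P^T = P -> lambda_min P * vnorm x ^+ 2 <= qform P x.
Proof.
move=> sP; have sNP : (- P)^T = - P by rewrite linearN /= sP.
have := qform_le_lambda_max (- P) x sNP.
by rewrite lambda_minE /qform mulmxN mulNmx mxE mulNr lerNl.
Qed.

Lemma lambda_min_gt0 P : spd P -> 0 < lambda_min P.
Proof.
move=> [sP Ppos]; have sNP : (- P)^T = - P by rewrite linearN /= sP.
have := (lambda_maxP (- P) sNP).1; rewrite eigenvalueN -lambda_minE.
move=> /eigenvalueP [w wP w0]; have := Ppos w^T.
rewrite qform_rdot trmxK wP rdotZl pmulr_lgt0 ?rdotvv_gt0 //; apply.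
by apply: contra w0 => /eqP/(congr1 trmx); rewrite trmxK linear0 => ->.
Qed.

Lemma vnorm_spd_sqrt {S P} x : is_spd_sqrt S P -> vnorm (S *m x) = Num.sqrt (qform P x).
Proof.
move=> [[sS _] <-]; rewrite vnormE qform_rdot /rdot !trmx_mul sS trmxK.
by rewrite sS !mulmxA.
Qed.

Lemma vnorm_spd_sqrt_le {S P Q} x : is_spd_sqrt S P -> Q^T = Q -> loewner_le P Q ->
  vnorm (S *m x) <= Num.sqrt (lambda_max Q) * vnorm x.
Proof.
move=> SP sQ PQ; rewrite (vnorm_spd_sqrt _ SP) -[vnorm x]ger0_norm ?vnorm_ge0 //.
rewrite -sqrtr_sqr mulrC -sqrtrM ?sqr_ge0 // ler_wsqrtr //.
by rewrite mulrC (le_trans (PQ x)) // qform_le_lambda_max.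
Qed.

Lemma vnorm_spd_sqrt_ge {S P Q} x : is_spd_sqrt S P -> Q^T = Q -> loewner_le Q P ->
  Num.sqrt (lambda_min Q) * vnorm x <= vnorm (S *m x).
Proof.
move=> SP sQ QP; rewrite (vnorm_spd_sqrt _ SP) -[vnorm x]ger0_norm ?vnorm_ge0 //.
rewrite -sqrtr_sqr mulrC -sqrtrM ?sqr_ge0 // ler_wsqrtr //.
by rewrite mulrC (le_trans _ (QP x)) // lambda_min_le_qform.
Qed.

Lemma vnorm_spd_sqrt_scale {S P S' P' mu} x : is_spd_sqrt S P -> is_spd_sqrt S' P' ->
  loewner_le P' (mu *: P) -> 0 <= mu -> vnorm (S' *m x) <= Num.sqrt mu * vnorm (S *m x).
Proof.
move=> SP SP' P'P mu0; rewrite (vnorm_spd_sqrt _ SP) (vnorm_spd_sqrt _ SP').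
rewrite -sqrtrM // ler_wsqrtr //; apply: le_trans (P'P x) _.
by rewrite /qform -scalemxAr -scalemxAl mxE.
Qed.

Lemma vnorm_spd_sqrt_perturb_le {S P Q} {B : 'M[R]_(n.+1, m)} {y e a Bbar ebar} :
  is_spd_sqrt S P -> Q^T = Q -> loewner_le P Q -> 0 <= Bbar ->
  opnorm B <= Bbar -> vnorm e <= ebar -> vnorm (S *m y) <= a ->
  vnorm (S *m (y + B *m e)) <= a + Num.sqrt (lambda_max Q) * (Bbar * ebar).
Proof.
move=> SP sQ PQ Bbar0 BBbar eebar Sy; rewrite mulmxDr.
apply: le_trans (vnormD _ _) _; apply: lerD Sy _.
apply: le_trans (vnorm_spd_sqrt_le _ SP sQ PQ) _; rewrite ler_wpM2l ?sqrtr_ge0 //.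
apply: le_trans (opnorm_bound _ _) _.
apply: le_trans (ler_wpM2r (vnorm_ge0 _) BBbar) _.
exact: ler_wpM2l.
Qed.

End QuadraticForm.

Section DwellTime.
Context {R : realType} {m : nat}.

Lemma dwell_time_rate_lt1 (T : nat) (alpha mu : R) : (0 < T)%N -> 0 < alpha < 1 ->
  1 <= mu -> - ln mu / ln alpha < T%:R -> alpha * powR mu T%:R^-1 < 1.
Proof.
move=> T0 /andP[a0 a1] mu1; have la : ln alpha < 0 by rewrite ln_lt0 // a0.
rewrite ltr_ndivrMr // => hT.
have T0' : 0 < T%:R :> R by rewrite ltr0n.
rewrite /powR gt_eqF ?(lt_le_trans ltr01) // -[X in X * _](lnK a0) -expRD expR_lt1.
by rewrite -(pmulr_rlt0 _ T0') mulrDr mulrA mulfV ?gt_eqF // mul1r; lra.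
Qed.

Lemma powR_invn_expn (mu : R) (T : nat) : (0 < T)%N -> 0 <= mu ->
  powR mu T%:R^-1 ^+ T = mu.
Proof.
move=> T0 mu0; rewrite -powR_mulrn ?powR_ge0 // -powRrM mulVf ?powRr1 //.
by rewrite pnatr_eq0 -lt0n.
Qed.

Lemma sqrtrX (a : R) (k : nat) : 0 <= a -> Num.sqrt (a ^+ k) = Num.sqrt a ^+ k.
Proof.
by move=> a0; elim: k => [|k IHk]; rewrite ?sqrtr1 // !exprS sqrtrM // IHk.
Qed.

Lemma powR_natr_half (a : R) (k : nat) : 0 <= a -> powR a (k%:R / 2) = Num.sqrt a ^+ k.
Proof.
by move=> a0; rewrite mulrC powRrM powR12_sqrt // powR_mulrn // sqrtr_ge0.
Qed.

Lemma dwell_time_constants {T : nat} {alpha mu : R} : (0 < T)%N -> 0 < alpha < 1 ->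
  1 <= mu -> - ln mu / ln alpha < T%:R ->
  let ahat := alpha * powR mu T%:R^-1 in let sg := Num.sqrt (powR mu T%:R^-1) in
  [/\ 1 <= sg, sg ^+ T = Num.sqrt mu, Num.sqrt alpha * sg = Num.sqrt ahat,
    Num.sqrt alpha * sg < 1 & powR (ahat / alpha) (T%:R / 2) = sg ^+ T].
Proof.
move=> T0 alpha01 mu1 dwell ahat sg; have /andP[alpha0 _] := alpha01.
have mu0 : 0 <= mu := le_trans ler01 mu1.
have r_eq : Num.sqrt alpha * sg = Num.sqrt ahat by rewrite -sqrtrM ?(ltW alpha0).
split=> //.
- rewrite -sqrtr1 ler_sqrt ?powR_ge0 // -[X in X <= _](powRr0 mu).
  by apply: (ler_powR mu1); rewrite invr_ge0.
- by rewrite -sqrtrX ?powR_ge0 ?powR_invn_expn.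
- by rewrite r_eq -sqrtr1 ltr_sqrt ?ltr01 // dwell_time_rate_lt1.
by rewrite mulrAC mulfV ?gt_eqF ?mul1r // powR_natr_half ?powR_ge0.
Qed.

Lemma geometric_recursion_bound {r c : R} {w : nat -> R} : 0 <= r -> r < 1 -> 0 <= c ->
  (forall k, w k.+1 <= r * w k + c) -> forall k, w k <= r ^+ k * w 0%N + c / (1 - r).
Proof.
move=> r0 r1 c0 wS; elim=> [|k IHk]; first by rewrite expr0 mul1r lerDl divr_ge0 // subr_ge0 ltW.
have fix_c : r * (c / (1 - r)) + c = c / (1 - r).
  by field; rewrite subr_eq0 eq_sym lt_eqF.
rewrite -[X in _ <= _ + X]fix_c exprS -mulrA addrA -mulrDr.
by apply: le_trans (wS k) _; rewrite lerD2r ler_wpM2l.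
Qed.

Lemma switched_decay_bound {T : nat} {W : nat -> nat -> R} {s sg c : R} :
  (0 < T)%N -> 0 <= s -> 1 <= sg -> s * sg < 1 -> 0 <= c ->
  (forall i k, 0 <= W i k) ->
  (forall i k, (i * T <= k < i * T + T)%N -> W i k.+1 <= s * W i k + c) ->
  (forall i k, W i.+1 k <= sg ^+ T * W i k) ->
  forall k, W (k %/ T)%N k <= (s * sg) ^+ k * W 0%N 0%N + sg ^+ T * c / (1 - s * sg).
Proof.
move=> T0 s0 sg1 r1 c0 W0 Wstep Wswitch k.
have sg0 : 0 <= sg by rewrite (le_trans ler01).
have divmod i j : (j < T)%N -> ((i * T + j) %/ T = i /\ (i * T + j) %% T = j)%N.
  by move=> jT; rewrite divnMDl // divn_small // addn0 modnMDl modn_small.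
pose V k := sg ^+ (k %% T) * W (k %/ T)%N k.
have V_ge : W (k %/ T)%N k <= V k by rewrite ler_peMl ?exprn_ege1.
have VS k' : V k'.+1 <= s * sg * V k' + sg ^+ T * c.
  rewrite /V; move: (divn_eq k' T) (ltn_pmod k' T0).
  move: (k' %/ T)%N (k' %% T)%N => i j -> jT.
  have V1 : sg ^+ ((i * T + j).+1 %% T) * W ((i * T + j).+1 %/ T)%N (i * T + j).+1
      <= sg ^+ j.+1 * W i (i * T + j).+1.
    case: (ltngtP j.+1 T) => [jT1||jT1]; first by rewrite -addnS; have [-> ->] := divmod i _ jT1.
      by rewrite ltnNge jT.
    rewrite -addnS jT1 -mulSnr modnMl mulnK // expr0 mul1r.
    exact: Wswitch.
  have WS := Wstep i (i * T + j) (ltac:(by rewrite leq_addr ltn_add2l)).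
  apply: le_trans V1 _; apply: le_trans (ler_wpM2l (exprn_ge0 _ sg0) WS) _.
  rewrite mulrDr lerD ?ler_wpM2r ?(ler_weXn2l sg1 jT) //.
  by rewrite le_eqVlt exprS; apply/orP; left; apply/eqP; ring.
have := geometric_recursion_bound (mulr_ge0 s0 sg0) r1
  (mulr_ge0 (exprn_ge0 _ sg0) c0) VS k.
by rewrite /V mod0n div0n expr0 mul1r; apply: le_trans V_ge.
Qed.

Lemma segment_input_bound {T LD : nat} {eps : nat -> 'cV[R]_m} {epsbar : R} :
  0 <= epsbar ->
  (forall i k, (i * T <= k < i * T + T)%N -> ~~ (i.+1 * T - LD <= k)%N -> eps k = 0) ->
  (forall i k, (i.+1 * T - LD <= k < i.+1 * T)%N -> vnorm (eps k) <= epsbar) ->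
  forall i k, (i * T <= k < i * T + T)%N -> vnorm (eps k) <= epsbar.
Proof.
move=> epsbar0 eps0 eps_le i k ik; have [tail|head] := boolP (i.+1 * T - LD <= k)%N.
  by apply: (eps_le i); rewrite tail mulSnr; case/andP: ik.
by rewrite (eps0 i k ik head) vnorm0.
Qed.

End DwellTime.

Theorem theorem2 (R : realType) (n m : nat) (T LD : nat)
  (alpha mu Bbar epsbar : R)
  (Pmin Pmax : 'M[R]_n) (P Psq : nat -> 'M[R]_n)
  (eta g : nat -> 'cV[R]_n) (B : nat -> 'M[R]_(n, m)) (eps : nat -> 'cV[R]_m) :
  (1 <= n)%N -> (1 <= m)%N -> (1 <= T)%N -> (1 <= LD)%N -> (LD <= T)%N ->
  0 < alpha < 1 -> 1 <= mu -> 0 <= Bbar -> 0 <= epsbar ->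
  - ln mu / ln alpha < T%:R ->
  spd Pmin -> spd Pmax ->
  (forall i, spd (P i)) ->
  (forall i, loewner_le Pmin (P i) /\ loewner_le (P i) Pmax) ->
  (forall i, loewner_le (P i.+1) (mu *: P i)) ->
  (forall i, is_spd_sqrt (Psq i) (P i)) ->
  (forall k, eta k.+1 = g k + B k *m eps k) ->
  (forall k, opnorm (B k) <= Bbar) ->
  (forall i k, (i * T <= k < i * T + T)%N -> ~~ (i.+1 * T - LD <= k)%N ->
     eps k = 0) ->
  (forall i k, (i.+1 * T - LD <= k < i.+1 * T)%N -> vnorm (eps k) <= epsbar) ->
  (forall i k, (i * T <= k < i * T + T)%N ->
     vnorm (Psq i *m g k) <= Num.sqrt alpha * vnorm (Psq i *m eta k)) ->
  let ahat := alpha * powR mu (T%:R^-1) in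
  let pmin := lambda_min Pmin in
  let pmax := lambda_max Pmax in
  forall k : nat,
    vnorm (eta k) <=
      Num.sqrt (pmax / pmin) * powR ahat (k%:R / 2) * vnorm (eta 0%N)
    + Num.sqrt (pmax / pmin) * (powR (ahat / alpha) (T%:R / 2)
        / (1 - Num.sqrt ahat)) * Bbar * epsbar.
Proof.
case: n Pmin Pmax P Psq eta g B => [//|n] Pmin Pmax P Psq eta g B _ _ T0 _ _.
move=> alpha01 mu1 Bbar0 epsbar0 dwell spdPmin spdPmax _ PminPPmax Pmu Psq_sqrt
  eta_rec Bnorm eps0 eps_le decay ahat pmin pmax k.
have [sg1 sgT r_eq r1 ahat_T] := dwell_time_constants T0 alpha01 mu1 dwell.
set sg := Num.sqrt _ in sg1 sgT r_eq r1 ahat_T.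
have seg_step i k' : (i * T <= k' < i * T + T)%N ->
    vnorm (Psq i *m eta k'.+1) <=
    Num.sqrt alpha * vnorm (Psq i *m eta k') + Num.sqrt pmax * (Bbar * epsbar).
  move=> ik'; rewrite eta_rec.
  exact: vnorm_spd_sqrt_perturb_le (Psq_sqrt i) spdPmax.1 (PminPPmax i).2 Bbar0
    (Bnorm k') (segment_input_bound epsbar0 eps0 eps_le i k' ik') (decay i k' ik').
have switch i k' : vnorm (Psq i.+1 *m eta k') <= sg ^+ T * vnorm (Psq i *m eta k').
  by rewrite sgT; exact: vnorm_spd_sqrt_scale _ (Psq_sqrt i) (Psq_sqrt i.+1) (Pmu i)
    (le_trans ler01 mu1).
have := switched_decay_bound T0 (sqrtr_ge0 _) sg1 r1
  (mulr_ge0 (sqrtr_ge0 pmax) (mulr_ge0 Bbar0 epsbar0)) (fun _ _ => vnorm_ge0 _)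
  seg_step switch k; rewrite r_eq => Wk.
have pmin0 : 0 < pmin by exact: lambda_min_gt0.
rewrite ahat_T powR_natr_half ?mulr_ge0 ?powR_ge0 ?(ltW (andP alpha01).1) //.
have -> : Num.sqrt (pmax / pmin) = (Num.sqrt pmin)^-1 * Num.sqrt pmax.
  by rewrite mulrC sqrtrM ?sqrtrV ?invr_ge0 ?(ltW pmin0).
rewrite -(ler_pM2l (_ : 0 < Num.sqrt pmin)) ?sqrtr_gt0 //.
have -> : forall x y : R, Num.sqrt pmin * ((Num.sqrt pmin)^-1 * Num.sqrt pmax * x * y +
    (Num.sqrt pmin)^-1 * Num.sqrt pmax * (sg ^+ T / (1 - Num.sqrt ahat)) * Bbar * epsbar) =
    x * (Num.sqrt pmax * y) + sg ^+ T * (Num.sqrt pmax * (Bbar * epsbar)) / (1 - Num.sqrt ahat).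
  by move=> x y; field; rewrite !gt_eqF ?sqrtr_gt0 // subr_gt0 -r_eq.
apply: le_trans (vnorm_spd_sqrt_ge _ (Psq_sqrt _) spdPmin.1 (PminPPmax _).1) _.
apply: le_trans Wk _; rewrite lerD2r ler_wpM2l ?exprn_ge0 ?sqrtr_ge0 //.
exact: vnorm_spd_sqrt_le _ (Psq_sqrt 0%N) spdPmax.1 (PminPPmax 0%N).2.
Qed.
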